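(* In the setting of the context, assume $G''(p_1)<0$ and $G''(p_2)<0$, and that $\ell\in(0,\min\{L,1-L\})$ is chosen so that $$\big[(L-\ell)G''(p_1)+(1-L-\ell)G''(p_2)\big]e^{-K_1}+2\ell K_2e^{K_1}<0.$$ Then $I_{\theta_0+c}(1)<0<I_{\theta_0-c}(1)$ for all sufficiently small $c>0$.
   Context: Let $G\in\mathrm{C}^2(\mathbb{R})$ be coercive ($G(p)\to\infty$ as $p\to\pm\infty$), $p_1<p_2$ with $G'(p_1)<0<G'(p_2)$, $L=\frac{G'(p_2)}{G'(p_2)-G'(p_1)}$, $K_1=\max\{|G'(p)|:\,p\in[p_1,p_2]\}$, $K_2=\max\{|G''(p)|:\,p\in[p_1,p_2]\}$. Given $\ell$, let $f$ be a $1$-periodic function in $\mathrm{C}^1(\mathbb{R})$ with $f'$ Lipschitz, $p_1\le f\le p_2$, $f=p_1$ on $[0,L-\ell]$, $f=p_2$ on $[L,1-\ell]$, and $\int_0^1G'(f(x))dx=0$. Define the $1$-periodic Lipschitz potential $V(x)=-f'(x)-G(f(x))$ and $\theta_0=\int_0^1f(x)dx$. For each $\theta\in\mathbb{R}$, $f_\theta\in\mathrm{C}^1(\mathbb{R})$ denotes the unique $1$-periodic function with $\int_0^1f_\theta=\theta$ and $f_\theta'+G(f_\theta)+V=\overline{H}(\theta)$ on $\mathbb{R}$ for some (unique) constant $\overline{H}(\theta)$; and $I_\theta(1)=\int_0^1G'(f_\theta(x))dx$. *)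

From Stdlib Require Import Reals.
From Coquelicot Require Import Coquelicot.
Open Scope R_scope.

Definition is_C2 (G : R -> R) : Prop :=
  forall x, ex_derive G x /\ ex_derive (Derive G) x /\
            continuous (Derive (Derive G)) x.

Definition is_C1 (g : R -> R) : Prop :=
  forall x, ex_derive g x /\ continuous (Derive g) x.

Definition coercive (G : R -> R) : Prop :=
  forall M : R, exists r : R, forall p : R, r <= Rabs p -> M <= G p.

Definition one_periodic (g : R -> R) : Prop := forall x, g (x + 1) = g x.

Definition lipschitz (g : R -> R) : Prop :=
  exists M : R, forall x y, Rabs (g x - g y) <= M * Rabs (x - y).

Definition is_max_on (h : R -> R) (a b K : R) : Prop :=
  (forall p, a <= p <= b -> h p <= K) /\ (exists p, a <= p <= b /\ h p = K).

Definition Lval (G : R -> R) (p1 p2 : R) : R :=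
  Derive G p2 / (Derive G p2 - Derive G p1).

Definition Vpot (G f : R -> R) (x : R) : R := - Derive f x - G (f x).

(* I_theta(1) = int_0^1 G'(f_theta(x)) dx *)
Definition I1 (G g : R -> R) : R := RInt (fun x => Derive G (g x)) 0 1.

From Stdlib Require Import Reals Lra.
From Coquelicot Require Import Coquelicot.
Open Scope R_scope.

(* Two periodic solutions g1, g2 of the cell equation g' + G(g) + V = H satisfy
   (g2 - g1)' = (H2 - H1) - a (g2 - g1), with a the difference quotient of G between
   g1 and g2. Hence (g2 - g1) e^{∫a} is monotone, and periodicity forces g2 - g1 to
   have a constant sign, given by the order of the means. When the means differ by a
   small c, a stays within O(g2 - g1) of G'(f), whose integral vanishes and which is
   bounded by K1; so g2 - g1 lies between w0 e^{-K1-O(c)} and w0 e^{K1+O(c)} with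
   w0 = O(c). Then G'(g2) - G'(g1) is essentially G''(f) (g2 - g1), and since f equals
   p1 on [0, L - ell] and p2 on [L, 1 - ell], its integral is at most
   w0 [((L-ell) G''(p1) + (1-L-ell) G''(p2)) e^{-K1} + 2 ell K2 e^{K1}] up to small
   errors, which is negative. Comparing f with f_{θ0+c} and f_{θ0-c} gives both signs. *)

Lemma continuity_pt_of_ex_derive (g : R -> R) x : ex_derive g x -> continuity_pt g x.
Proof. intro H. apply continuity_pt_filterlim. exact (ex_derive_continuous g x H). Qed.

Lemma exp_le_compat x y : x <= y -> exp x <= exp y.
Proof. intros [Hlt | ->]; [left; apply exp_increasing, Hlt | right; reflexivity]. Qed.

Lemma one_periodic_1_0 (g : R -> R) : one_periodic g -> g 1 = g 0.
Proof. intro H. specialize (H 0). rewrite Rplus_0_l in H. exact H. Qed.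

Lemma is_C2_C1 (G : R -> R) : is_C2 G -> is_C1 G.
Proof.
  intros H x. split; [apply H | exact (ex_derive_continuous _ _ (proj1 (proj2 (H x))))].
Qed.

Lemma is_C2_Derive_C1 (G : R -> R) : is_C2 G -> is_C1 (Derive G).
Proof. intros H x. apply H. Qed.

Definition between (u v x : R) : Prop := Rmin u v <= x <= Rmax u v.

Lemma between_in_interval u v x a b :
  between u v x -> a <= u <= b -> a <= v <= b -> a <= x <= b.
Proof. unfold between, Rmin, Rmax; destruct (Rle_dec u v); lra. Qed.

Lemma between_dist_le u v x z :
  between u v x -> z = u \/ z = v -> Rabs (x - z) <= Rabs (v - u).
Proof.
  unfold between, Rmin, Rmax; intros H Hz.
  destruct (Rle_dec u v); destruct Hz as [-> | ->];
    unfold Rabs; repeat destruct (Rcase_abs _); lra.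
Qed.

Lemma between_scaled_sign w0 e1 w e :
  0 < e1 -> 0 < e -> between w0 (w0 * e1) (w * e) -> (0 < w0 -> 0 < w) /\ (w0 <= 0 -> w <= 0).
Proof. unfold between, Rmin, Rmax; intros; destruct (Rle_dec w0 (w0 * e1)); split; nra. Qed.

Lemma ex_RInt_of_continuity (h : R -> R) :
  (forall x, continuity_pt h x) -> forall u v, ex_RInt h u v.
Proof.
  intros Hh u v. apply (ex_RInt_continuous (V := R_CompleteNormedModule)).
  intros z _. apply continuity_pt_filterlim, Hh.
Qed.

Lemma is_derive_RInt_0 (h : R -> R) :
  (forall x, continuity_pt h x) -> forall x, is_derive (fun y => RInt h 0 y) x (h x).
Proof.
  intros Hh x. apply is_derive_RInt with 0.
  - apply filter_forall. intro y. apply (RInt_correct (V := R_CompleteNormedModule)).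
    apply ex_RInt_of_continuity, Hh.
  - apply continuity_pt_filterlim, Hh.
Qed.

Lemma RInt_le_const (h : R -> R) a b k :
  a <= b -> ex_RInt h a b -> (forall x, a < x < b -> h x <= k) -> RInt h a b <= (b - a) * k.
Proof.
  intros Hab Hh Hk. replace ((b - a) * k) with (RInt (fun _ => k) a b).
  - apply RInt_le; auto. apply ex_RInt_const.
  - rewrite RInt_const. reflexivity.
Qed.

Lemma RInt_ge_const (h : R -> R) a b k :
  a <= b -> ex_RInt h a b -> (forall x, a < x < b -> k <= h x) -> (b - a) * k <= RInt h a b.
Proof.
  intros Hab Hh Hk. replace ((b - a) * k) with (RInt (fun _ => k) a b).
  - apply RInt_le; auto. apply ex_RInt_const.
  - rewrite RInt_const. reflexivity.
Qed.

Lemma between_endpoints_of_derive_sign (F dF : R -> R) a b :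
  (forall y, is_derive F y (dF y)) -> ((forall y, 0 <= dF y) \/ (forall y, dF y <= 0)) ->
  forall x, a <= x <= b -> between (F a) (F b) (F x).
Proof.
  intros HF Hsign x Hx.
  assert (HcF : forall y, continuity_pt F y)
    by (intro y; apply continuity_pt_of_ex_derive; eexists; apply HF).
  destruct (MVT_gen F a x dF) as [c1 [_ Hc1]]; [intros; apply HF | intros; apply HcF |].
  destruct (MVT_gen F x b dF) as [c2 [_ Hc2]]; [intros; apply HF | intros; apply HcF |].
  unfold between, Rmin, Rmax; destruct (Rle_dec (F a) (F b));
    destruct Hsign as [Hs | Hs]; pose proof (Hs c1); pose proof (Hs c2); nra.
Qed.

Section Slope.

Variable G : R -> R.
Hypothesis HG : is_C1 G.

Lemma C1_is_derive x : is_derive G x (Derive G x).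
Proof. apply Derive_correct, HG. Qed.

Lemma C1_continuity_pt x : continuity_pt G x.
Proof. apply continuity_pt_of_ex_derive, HG. Qed.

Lemma C1_Derive_continuity_pt x : continuity_pt (Derive G) x.
Proof. apply continuity_pt_filterlim, HG. Qed.

Lemma continuity_pt_Derive_comp (g : R -> R) x :
  continuity_pt g x -> continuity_pt (fun y => Derive G (g y)) x.
Proof.
  intro Hg. apply (continuity_pt_comp g (Derive G)); [exact Hg | apply C1_Derive_continuity_pt].
Qed.

Lemma MVT_between u v : exists xi, between u v xi /\ G v - G u = Derive G xi * (v - u).
Proof.
  destruct (MVT_gen G u v (Derive G)) as [xi [Hxi Exi]].
  - intros; apply C1_is_derive.
  - intros; apply C1_continuity_pt.
  - exists xi; split; assumption.
Qed.

Definition slope (u v : R) : R :=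
  if Req_EM_T v u then Derive G u else (G v - G u) / (v - u).

Lemma slope_spec u v : G v - G u = slope u v * (v - u).
Proof.
  unfold slope; destruct (Req_EM_T v u) as [-> | Hne]; [ring | field; lra].
Qed.

Lemma slope_MVT u v : exists xi, between u v xi /\ slope u v = Derive G xi.
Proof.
  unfold slope; destruct (Req_EM_T v u) as [-> | Hne].
  - exists u. split; [unfold between; rewrite Rmin_left, Rmax_left |]; lra.
  - destruct (MVT_between u v) as [xi [Hxi Exi]].
    exists xi. split; [exact Hxi |]. rewrite Exi. field. lra.
Qed.

Lemma continuity_pt_slope (g1 g2 : R -> R) x :
  continuity_pt g1 x -> continuity_pt g2 x -> continuity_pt (fun y => slope (g1 y) (g2 y)) x.
Proof.
  intros c1 c2.
  destruct (Req_EM_T (g2 x) (g1 x)) as [Heq | Hne].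
  - apply continuity_pt_locally. intro eps.
    destruct (proj1 (continuity_pt_locally _ _) (C1_Derive_continuity_pt (g1 x)) eps) as [d Hd].
    destruct (proj1 (continuity_pt_locally _ _) c1 d) as [d1 Hd1].
    destruct (proj1 (continuity_pt_locally _ _) c2 d) as [d2 Hd2].
    exists (mkposreal _ (Rmin_pos _ _ (cond_pos d1) (cond_pos d2))). intros y Hy.
    specialize (Hd1 y (ball_le x _ _ (Rmin_l d1 d2) y Hy)).
    specialize (Hd2 y (ball_le x _ _ (Rmin_r d1 d2) y Hy)).
    assert (Hx : slope (g1 x) (g2 x) = Derive G (g1 x))
      by (unfold slope; destruct (Req_EM_T _ _); [reflexivity | contradiction]).
    destruct (slope_MVT (g1 y) (g2 y)) as [xi [Hxi ->]]. rewrite Hx. apply Hd.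
    change (Rabs (xi - g1 x) < d). rewrite Heq in Hd2.
    apply Rabs_def2 in Hd1; apply Rabs_def2 in Hd2; apply Rabs_def1;
      unfold between, Rmin, Rmax in Hxi; destruct (Rle_dec (g1 y) (g2 y)); lra.
  - apply continuity_pt_ext_loc with (fun y => (G (g2 y) - G (g1 y)) / (g2 y - g1 y)).
    + assert (cw : continuity_pt (fun y => g2 y - g1 y) x)
        by (apply continuity_pt_minus; assumption).
      destruct (proj1 (continuity_pt_locally _ _) cw (mkposreal _ (Rabs_pos_lt (g2 x - g1 x)
        ltac:(lra)))) as [d Hd].
      exists d. intros y Hy. specialize (Hd y Hy). simpl in Hd.
      unfold slope; destruct (Req_EM_T (g2 y) (g1 y)) as [Ey | _]; [| reflexivity].
      rewrite Ey, Rminus_diag, Rminus_0_l, Rabs_Ropp in Hd. lra.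
    + apply continuity_pt_div; [apply continuity_pt_minus | apply continuity_pt_minus | lra];
        try apply (continuity_pt_comp _ G); auto using C1_continuity_pt.
Qed.

End Slope.

Lemma slope_sub_Derive_le (G : R -> R) (a b K u v z : R) :
  is_C2 G -> (forall p, a <= p <= b -> Rabs (Derive (Derive G) p) <= K) ->
  a <= u <= b -> a <= v <= b -> z = u \/ z = v ->
  Rabs (slope G u v - Derive G z) <= K * Rabs (v - u).
Proof.
  intros HG HK Hu Hv Hz.
  assert (Hz' : a <= z <= b) by (destruct Hz as [-> | ->]; assumption).
  destruct (slope_MVT G (is_C2_C1 G HG) u v) as [xi [Hxi ->]].
  destruct (MVT_between (Derive G) (is_C2_Derive_C1 G HG) z xi) as [zeta [Hzeta ->]].
  rewrite Rabs_mult. apply Rmult_le_compat; try apply Rabs_pos.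
  - apply HK, (between_in_interval z xi); auto. apply (between_in_interval u v); auto.
  - apply (between_dist_le u v); auto.
Qed.

Lemma Derive_sub_le (G : R -> R) (a b eps delta u v z : R) :
  is_C2 G ->
  (forall y y', a <= y <= b -> a <= y' <= b -> Rabs (y - y') < delta ->
     Rabs (Derive (Derive G) y - Derive (Derive G) y') < eps) ->
  a <= u <= b -> a <= v <= b -> z = u \/ z = v -> u <= v -> v - u < delta ->
  Derive G v - Derive G u <= (Derive (Derive G) z + eps) * (v - u).
Proof.
  intros HG Hunif Hu Hv Hz Huv Hd.
  assert (Hz' : a <= z <= b) by (destruct Hz as [-> | ->]; assumption).
  destruct (MVT_between (Derive G) (is_C2_Derive_C1 G HG) u v) as [xi [Hxi ->]].
  apply Rmult_le_compat_r; [lra |].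
  assert (Hxi_z : Rabs (xi - z) < delta).
  { eapply Rle_lt_trans; [apply (between_dist_le u v); auto |]. rewrite Rabs_right; lra. }
  specialize (Hunif xi z (between_in_interval u v xi a b Hxi Hu Hv) Hz' Hxi_z).
  apply Rabs_def2 in Hunif. lra.
Qed.

Section Cell_problem.

Variables G V : R -> R.
Hypothesis HG : is_C1 G.

Definition solves_cell (g : R -> R) (H : R) : Prop :=
  (forall x, ex_derive g x) /\ (forall x, Derive g x + G (g x) + V x = H) /\ g 1 = g 0.

Lemma solves_cell_continuity g H : solves_cell g H -> forall x, continuity_pt g x.
Proof. intros [Hd _] x. apply continuity_pt_of_ex_derive, Hd. Qed.

Lemma cell_gap_weighted_between g1 g2 H1 H2 :
  solves_cell g1 H1 -> solves_cell g2 H2 ->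
  forall x, 0 <= x <= 1 ->
  between (g2 0 - g1 0)
          ((g2 0 - g1 0) * exp (RInt (fun y => slope G (g1 y) (g2 y)) 0 1))
          ((g2 x - g1 x) * exp (RInt (fun y => slope G (g1 y) (g2 y)) 0 x)).
Proof.
  intros S1 S2 x Hx.
  destruct S1 as [d1 [E1 P1]], S2 as [d2 [E2 P2]].
  set (a := fun y => slope G (g1 y) (g2 y)).
  assert (ca : forall y, continuity_pt a y)
    by (intro; apply continuity_pt_slope; auto; apply continuity_pt_of_ex_derive; auto).
  set (W := fun y => (g2 y - g1 y) * exp (RInt a 0 y)).
  assert (dW : forall y, is_derive W y ((H2 - H1) * exp (RInt a 0 y))).
  { intro y.
    assert (Dw : is_derive (fun t => g2 t - g1 t) y (Derive g2 y - Derive g1 y))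
      by (apply (is_derive_minus g2 g1); apply Derive_correct; auto).
    assert (DA : is_derive (fun t => exp (RInt a 0 t)) y (a y * exp (RInt a 0 y)))
      by (apply (is_derive_comp exp); [apply is_derive_exp | apply is_derive_RInt_0; auto]).
    pose proof (is_derive_mult _ _ y _ _ Dw DA Rmult_comm) as D.
    unfold plus, mult in D; simpl in D.
    replace ((H2 - H1) * exp (RInt a 0 y)) with
      ((Derive g2 y - Derive g1 y) * exp (RInt a 0 y) + (g2 y - g1 y) * (a y * exp (RInt a 0 y)));
      [exact D |].
    specialize (E1 y); specialize (E2 y).
    replace (Derive g2 y - Derive g1 y) with (H2 - H1 - (G (g2 y) - G (g1 y))) by lra.
    rewrite slope_spec. unfold a. ring. }
  assert (Hsign : (forall y, 0 <= (H2 - H1) * exp (RInt a 0 y)) \/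
                  (forall y, (H2 - H1) * exp (RInt a 0 y) <= 0)).
  { destruct (Rle_dec 0 (H2 - H1)); [left | right]; intro y;
      pose proof (exp_pos (RInt a 0 y)); nra. }
  pose proof (between_endpoints_of_derive_sign W _ 0 1 dW Hsign x Hx) as HW.
  unfold W in HW; cbv beta in HW.
  replace (RInt a 0 0) with 0 in HW by (rewrite RInt_point; reflexivity).
  rewrite exp_0, Rmult_1_r, P1, P2 in HW. exact HW.
Qed.

Lemma cell_solutions_ordered g1 g2 H1 H2 :
  solves_cell g1 H1 -> solves_cell g2 H2 -> RInt g1 0 1 < RInt g2 0 1 ->
  forall x, 0 <= x <= 1 -> g1 x < g2 x.
Proof.
  intros S1 S2 Hlt.
  assert (Hsign : forall x, 0 <= x <= 1 ->
    (0 < g2 0 - g1 0 -> 0 < g2 x - g1 x) /\ (g2 0 - g1 0 <= 0 -> g2 x - g1 x <= 0))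
    by (intros x Hx; eapply between_scaled_sign;
        [apply exp_pos | apply exp_pos | apply (cell_gap_weighted_between _ _ _ _ S1 S2 x Hx)]).
  destruct (Rle_dec (g2 0 - g1 0) 0) as [Hn | Hp].
  - exfalso.
    assert (RInt g2 0 1 <= RInt g1 0 1).
    { apply RInt_le; try lra;
        try (apply ex_RInt_of_continuity; eapply solves_cell_continuity; eauto).
      intros y Hy. pose proof (proj2 (Hsign y ltac:(lra)) Hn). lra. }
    lra.
  - intros x Hx. pose proof (proj1 (Hsign x Hx) ltac:(lra)). lra.
Qed.

Lemma cell_solutions_bounded g_lo g_hi H_lo H_hi :
  solves_cell g_lo H_lo -> solves_cell g_hi H_hi ->
  exists Pmin Pmax, forall g H, solves_cell g H ->
    RInt g_lo 0 1 < RInt g 0 1 < RInt g_hi 0 1 ->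
    forall x, 0 <= x <= 1 -> Pmin <= g x <= Pmax.
Proof.
  intros Slo Shi.
  destruct (continuity_ab_min g_lo 0 1) as [xm [Hxm _]];
    [lra | intros; eapply solves_cell_continuity; eauto |].
  destruct (continuity_ab_maj g_hi 0 1) as [xM [HxM _]];
    [lra | intros; eapply solves_cell_continuity; eauto |].
  exists (g_lo xm), (g_hi xM). intros g H S [Hlo Hhi] x Hx.
  pose proof (cell_solutions_ordered _ _ _ _ Slo S Hlo x Hx).
  pose proof (cell_solutions_ordered _ _ _ _ S Shi Hhi x Hx).
  pose proof (Hxm x Hx); pose proof (HxM x Hx). lra.
Qed.

End Cell_problem.

Lemma between_exp_bounds w0 A1 Ax W s K1 :
  0 < w0 -> Rabs A1 <= s -> Rabs Ax <= K1 + s -> between w0 (w0 * exp A1) W ->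
  w0 * exp (- K1 - 2 * s) <= W * exp (- Ax) <= w0 * exp (K1 + 2 * s).
Proof.
  intros Hw0 HA1 HAx HW.
  apply Rabs_le_between in HA1, HAx.
  assert (HWb : w0 * exp (- s) <= W <= w0 * exp s).
  { pose proof (exp_le_compat (- s) A1 ltac:(lra)); pose proof (exp_le_compat A1 s ltac:(lra)).
    pose proof (exp_le_compat (- s) 0 ltac:(lra)); pose proof (exp_le_compat 0 s ltac:(lra)).
    rewrite exp_0 in *. unfold between, Rmin, Rmax in HW; destruct (Rle_dec _ _); nra. }
  assert (Hx : exp (- K1 - s) <= exp (- Ax) <= exp (K1 + s))
    by (split; apply exp_le_compat; lra).
  replace (- K1 - 2 * s) with (- s + (- K1 - s)) by ring.
  replace (K1 + 2 * s) with (s + (K1 + s)) by ring.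
  rewrite (exp_plus (- s)), (exp_plus s (K1 + s)), <- !Rmult_assoc.
  pose proof (exp_pos (- s)); pose proof (exp_pos (- K1 - s)); pose proof (exp_pos (- Ax)).
  split; apply Rmult_le_compat; nra.
Qed.

Lemma RInt_primitive_bounds (a w q : R -> R) (K1 K c : R) :
  (forall x, continuity_pt a x) -> (forall x, continuity_pt w x) ->
  (forall x, continuity_pt q x) ->
  (forall x, 0 <= x <= 1 -> 0 < w x) ->
  (forall x, 0 <= x <= 1 -> Rabs (a x - q x) <= K * w x) ->
  (forall x, 0 <= x <= 1 -> Rabs (q x) <= K1) ->
  RInt w 0 1 = c -> RInt q 0 1 = 0 ->
  Rabs (RInt a 0 1) <= K * c /\ forall x, 0 <= x <= 1 -> Rabs (RInt a 0 x) <= K1 + K * c.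
Proof.
  intros ca cw cq Hw Haq Hq Hc Hq0.
  pose proof (ex_RInt_of_continuity w cw) as Iw.
  assert (HK : 0 <= K).
  { pose proof (Haq 0 ltac:(lra)); pose proof (Hw 0 ltac:(lra)).
    pose proof (Rabs_pos (a 0 - q 0)). nra. }
  assert (Hdev : forall x, 0 <= x <= 1 -> Rabs (RInt a 0 x - RInt q 0 x) <= K * c).
  { intros x Hx.
    assert (cd : forall y, continuity_pt (fun y => a y - q y) y)
      by (intro; apply (continuity_pt_minus a q); auto).
    rewrite <- (RInt_minus (V := R_CompleteNormedModule) a q)
      by (apply ex_RInt_of_continuity; auto).
    eapply Rle_trans; [apply abs_RInt_le; [lra | apply ex_RInt_of_continuity, cd] |].
    eapply Rle_trans; [apply (RInt_le _ (fun y => K * w y)); try lra |].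
    - apply ex_RInt_of_continuity. intro.
      apply (continuity_pt_comp (fun y => a y - q y) Rabs); [apply cd | apply Rcontinuity_abs].
    - apply ex_RInt_of_continuity. intro. apply (continuity_pt_scal w); auto.
    - intros y Hy. apply Haq. lra.
    - rewrite <- Hc, <- (RInt_Chasles w 0 x 1) by auto.
      replace (RInt (fun y => K * w y) 0 x) with (K * RInt w 0 x)
        by (symmetry; exact (RInt_scal (V := R_CompleteNormedModule) w 0 x K (Iw 0 x))).
      assert (0 <= RInt w x 1) by (apply RInt_ge_0; auto; [lra | intros; left; apply Hw; lra]).
      unfold plus; simpl. nra. }
  split.
  - pose proof (Hdev 1 ltac:(lra)) as H1. rewrite Hq0, Rminus_0_r in H1. exact H1.
  - intros x Hx.
    assert (Rabs (RInt q 0 x) <= K1).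
    { eapply Rle_trans;
        [apply abs_RInt_le_const;
           [lra | apply ex_RInt_of_continuity, cq | intros; apply Hq; lra] |].
      pose proof (Hq 0 ltac:(lra)); pose proof (Rabs_pos (q 0)). nra. }
    pose proof (Hdev x Hx). apply Rabs_le_between.
    apply Rabs_le_between in H; apply Rabs_le_between in H0. lra.
Qed.

Lemma RInt_le_plateaus (Phi r w : R -> R) (L l r1 r2 K eps m M : R) :
  (forall x, continuity_pt Phi x) ->
  0 < l < L -> l < 1 - L ->
  (forall x, 0 <= x <= L - l -> r x = r1) ->
  (forall x, L <= x <= 1 - l -> r x = r2) ->
  r1 <= 0 -> r2 <= 0 -> 0 <= eps ->
  (forall x, 0 <= x <= 1 -> Rabs (r x) <= K) ->
  (forall x, 0 <= x <= 1 -> m <= w x <= M) -> 0 < m ->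
  (forall x, 0 <= x <= 1 -> Phi x <= (r x + eps) * w x) ->
  RInt Phi 0 1 <= m * ((L - l) * r1 + (1 - L - l) * r2) + M * (2 * l * K + eps).
Proof.
  intros cP Hl HlL Hr1 Hr2 r1n r2n Heps HK Hw Hm HP.
  pose proof (ex_RInt_of_continuity Phi cP) as IPhi.
  assert (Hplateau : forall x r0, 0 <= x <= 1 -> r x = r0 -> r0 <= 0 -> Phi x <= r0 * m + eps * M).
  { intros x r0 Hx Hr Hr0. specialize (HP x Hx). specialize (Hw x Hx). rewrite Hr in HP. nra. }
  assert (Hany : forall x, 0 <= x <= 1 -> Phi x <= K * M + eps * M).
  { intros x Hx. specialize (HP x Hx). specialize (Hw x Hx). specialize (HK x Hx).
    apply Rabs_le_between in HK. nra. }
  rewrite <- (RInt_Chasles Phi 0 (1 - l) 1), <- (RInt_Chasles Phi 0 L (1 - l)),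
    <- (RInt_Chasles Phi 0 (L - l) L) by apply IPhi.
  unfold plus; simpl.
  pose proof (RInt_le_const Phi 0 (L - l) (r1 * m + eps * M) ltac:(lra) (IPhi _ _)
    ltac:(intros x Hx; apply Hplateau; [lra | apply Hr1; lra | lra])).
  pose proof (RInt_le_const Phi (L - l) L (K * M + eps * M) ltac:(lra) (IPhi _ _)
    ltac:(intros x Hx; apply Hany; lra)).
  pose proof (RInt_le_const Phi L (1 - l) (r2 * m + eps * M) ltac:(lra) (IPhi _ _)
    ltac:(intros x Hx; apply Hplateau; [lra | apply Hr2; lra | lra])).
  pose proof (RInt_le_const Phi (1 - l) 1 (K * M + eps * M) ltac:(lra) (IPhi _ _)
    ltac:(intros x Hx; apply Hany; lra)).
  assert ((L - l - 0) * (r1 * m + eps * M) + (L - (L - l)) * (K * M + eps * M)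
          + (1 - l - L) * (r2 * m + eps * M) + (1 - (1 - l)) * (K * M + eps * M)
          = m * ((L - l) * r1 + (1 - L - l) * r2) + M * (2 * l * K + eps)) by ring.
  lra.
Qed.

Lemma perturbed_exp_negativity (S X K1 : R) :
  S <= 0 -> 0 <= X -> S * exp (- K1) + X * exp K1 < 0 ->
  exists tau, 0 < tau /\ forall t e, 0 <= t <= tau -> 0 <= e <= tau ->
    S * exp (- K1 - t) + (X + e) * exp (K1 + t) < 0.
Proof.
  intros HS HX Hneg.
  set (phi := fun t => S * exp (- K1 - t) + (X + t) * exp (K1 + t)).
  assert (Hphi0 : phi 0 < 0)
    by (unfold phi; rewrite Rminus_0_r, !Rplus_0_r; exact Hneg).
  assert (Hc : continuity_pt phi 0)
    by (apply continuity_pt_of_ex_derive; unfold phi; auto_derive; exact I).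
  destruct (proj1 (continuity_pt_locally phi 0) Hc (mkposreal (- phi 0) ltac:(lra))) as [d Hd].
  pose proof (cond_pos d) as Hd0.
  assert (Htau : phi (d / 2) < 0).
  { assert (Hb : ball 0 d (d / 2))
      by (change (Rabs (d / 2 - 0) < d); rewrite Rminus_0_r, Rabs_right; lra).
    specialize (Hd _ Hb). simpl in Hd. apply Rabs_def2 in Hd. lra. }
  exists (d / 2). split; [lra |]. intros t e Ht He. unfold phi in Htau.
  pose proof (exp_le_compat (- K1 - d / 2) (- K1 - t) ltac:(lra)).
  pose proof (exp_le_compat (K1 + t) (K1 + d / 2) ltac:(lra)).
  pose proof (exp_pos (K1 + t)).
  assert (S * exp (- K1 - t) <= S * exp (- K1 - d / 2)) by (apply Rmult_le_compat_neg_l; lra).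
  assert ((X + e) * exp (K1 + t) <= (X + d / 2) * exp (K1 + d / 2))
    by (apply Rmult_le_compat; lra).
  lra.
Qed.

Section Small_gap.

Variables (G V f : R -> R) (p1 p2 K1 K2 L l : R).
Hypothesis HG : is_C2 G.
Hypothesis Hf_range : forall x, p1 <= f x <= p2.
Hypothesis Hf_p1 : forall x, 0 <= x <= L - l -> f x = p1.
Hypothesis Hf_p2 : forall x, L <= x <= 1 - l -> f x = p2.
Hypothesis Hf_mean : RInt (fun x => Derive G (f x)) 0 1 = 0.
Hypothesis HK1 : forall p, p1 <= p <= p2 -> Rabs (Derive G p) <= K1.
Hypothesis HK2 : forall p, p1 <= p <= p2 -> Rabs (Derive (Derive G) p) <= K2.
Hypothesis Hl : 0 < l < L.
Hypothesis HlL : l < 1 - L.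
Hypothesis Hdd1 : Derive (Derive G) p1 <= 0.
Hypothesis Hdd2 : Derive (Derive G) p2 <= 0.

Lemma cell_gap_bounds (Pmin Pmax Kpp c : R) g1 g2 H1 H2 :
  solves_cell G V g1 H1 -> solves_cell G V g2 H2 -> f = g1 \/ f = g2 ->
  RInt g2 0 1 - RInt g1 0 1 = c -> 0 < c ->
  (forall x, 0 <= x <= 1 -> Pmin <= g1 x <= Pmax) ->
  (forall x, 0 <= x <= 1 -> Pmin <= g2 x <= Pmax) ->
  (forall p, Pmin <= p <= Pmax -> Rabs (Derive (Derive G) p) <= Kpp) ->
  forall x, 0 <= x <= 1 ->
    (g2 0 - g1 0) * exp (- K1 - 2 * Kpp * c) <= g2 x - g1 x
    <= (g2 0 - g1 0) * exp (K1 + 2 * Kpp * c).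
Proof.
  intros S1 S2 Hf Hc Hc0 R1 R2 HKpp.
  pose proof (is_C2_C1 G HG) as HG1.
  pose proof (solves_cell_continuity G V g1 H1 S1) as c1.
  pose proof (solves_cell_continuity G V g2 H2 S2) as c2.
  assert (cf : forall x, continuity_pt f x) by (destruct Hf as [-> | ->]; auto).
  assert (Hpos : forall x, 0 <= x <= 1 -> 0 < g2 x - g1 x).
  { intros x Hx. pose proof (cell_solutions_ordered G V HG1 g1 g2 H1 H2 S1 S2 ltac:(lra) x Hx).
    lra. }
  destruct (RInt_primitive_bounds (fun y => slope G (g1 y) (g2 y)) (fun y => g2 y - g1 y)
              (fun y => Derive G (f y)) K1 Kpp c) as [HA1 HAx].
  - intro. apply continuity_pt_slope; auto.
  - intro. apply (continuity_pt_minus g2 g1); auto.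
  - intro. apply continuity_pt_Derive_comp; auto.
  - exact Hpos.
  - intros x Hx. rewrite <- (Rabs_right (g2 x - g1 x)) by (pose proof (Hpos x Hx); lra).
    apply slope_sub_Derive_le with Pmin Pmax; auto.
    destruct Hf as [-> | ->]; auto.
  - intros x _. apply HK1, Hf_range.
  - rewrite <- Hc. apply (RInt_minus (V := R_CompleteNormedModule) g2 g1);
      apply ex_RInt_of_continuity; auto.
  - exact Hf_mean.
  - intros x Hx.
    set (A := fun x => RInt (fun y => slope G (g1 y) (g2 y)) 0 x).
    replace (g2 x - g1 x) with ((g2 x - g1 x) * exp (A x) * exp (- A x))
      by (rewrite Rmult_assoc, <- exp_plus, Rplus_opp_r, exp_0; ring).
    replace (2 * Kpp * c) with (2 * (Kpp * c)) by ring.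
    apply (between_exp_bounds _ (A 1));
      [apply Hpos; lra | exact HA1 | apply HAx, Hx
      | exact (cell_gap_weighted_between G V HG1 g1 g2 H1 H2 S1 S2 x Hx)].
Qed.

Lemma cell_gap_estimate (Pmin Pmax Kpp eps delta c : R) g1 g2 H1 H2 :
  solves_cell G V g1 H1 -> solves_cell G V g2 H2 -> f = g1 \/ f = g2 ->
  RInt g2 0 1 - RInt g1 0 1 = c -> 0 < c ->
  (forall x, 0 <= x <= 1 -> Pmin <= g1 x <= Pmax) ->
  (forall x, 0 <= x <= 1 -> Pmin <= g2 x <= Pmax) ->
  (forall p, Pmin <= p <= Pmax -> Rabs (Derive (Derive G) p) <= Kpp) ->
  (forall y z, Pmin <= y <= Pmax -> Pmin <= z <= Pmax -> Rabs (y - z) < delta ->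
     Rabs (Derive (Derive G) y - Derive (Derive G) z) < eps) ->
  0 <= eps -> c * exp (2 * K1 + 4 * Kpp * c) < delta ->
  RInt (fun x => Derive G (g2 x) - Derive G (g1 x)) 0 1 <=
    (g2 0 - g1 0) *
      (((L - l) * Derive (Derive G) p1 + (1 - L - l) * Derive (Derive G) p2)
         * exp (- K1 - 2 * Kpp * c) + (2 * l * K2 + eps) * exp (K1 + 2 * Kpp * c)).
Proof.
  intros S1 S2 Hf Hc Hc0 R1 R2 HKpp Hunif Heps Hdelta.
  pose proof (cell_gap_bounds Pmin Pmax Kpp c g1 g2 H1 H2 S1 S2 Hf Hc Hc0 R1 R2 HKpp) as Hbd.
  pose proof (solves_cell_continuity G V g1 H1 S1) as c1.
  pose proof (solves_cell_continuity G V g2 H2 S2) as c2.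
  pose proof (cell_solutions_ordered G V (is_C2_C1 G HG) _ _ _ _ S1 S2 ltac:(lra) 0 ltac:(lra)).
  set (w0 := g2 0 - g1 0) in *. set (t := 2 * Kpp * c) in *.
  assert (Hw0 : 0 < w0) by (unfold w0; lra).
  pose proof (exp_pos (- K1 - t)); pose proof (exp_pos (K1 + t)).
  assert (Hw0c : w0 * exp (- K1 - t) <= c).
  { rewrite <- Hc, <- (RInt_minus (V := R_CompleteNormedModule) g2 g1)
      by (apply ex_RInt_of_continuity; auto).
    apply Rle_trans with ((1 - 0) * (w0 * exp (- K1 - t))); [lra |].
    apply RInt_ge_const;
      [lra | apply ex_RInt_of_continuity; intro; apply (continuity_pt_minus g2 g1); auto |].
    intros x Hx. apply Hbd. lra. }
  assert (HM : w0 * exp (K1 + t) < delta).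
  { replace (w0 * exp (K1 + t)) with (w0 * exp (- K1 - t) * exp (2 * K1 + 4 * Kpp * c))
      by (rewrite Rmult_assoc, <- exp_plus; f_equal; f_equal; unfold t; ring).
    eapply Rle_lt_trans; [| exact Hdelta].
    apply Rmult_le_compat_r; [left; apply exp_pos | exact Hw0c]. }
  eapply Rle_trans.
  - apply (RInt_le_plateaus _ (fun x => Derive (Derive G) (f x)) (fun x => g2 x - g1 x)
             L l (Derive (Derive G) p1) (Derive (Derive G) p2) K2 eps
             (w0 * exp (- K1 - t)) (w0 * exp (K1 + t))); auto; try nra.
    + intro x. apply (continuity_pt_minus (fun y => Derive G (g2 y)) (fun y => Derive G (g1 y)));
        apply continuity_pt_Derive_comp; auto using is_C2_C1.
    + intros x Hx. rewrite Hf_p1; auto.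
    + intros x Hx. rewrite Hf_p2; auto.
    + intros x Hx. pose proof (Hbd x Hx).
      apply Derive_sub_le with Pmin Pmax delta; auto; try nra.
      destruct Hf as [-> | ->]; auto.
  - right. ring.
Qed.

Lemma small_gap_decreases_integral (Pmin Pmax : R) :
  Pmin <= Pmax ->
  ((L - l) * Derive (Derive G) p1 + (1 - L - l) * Derive (Derive G) p2) * exp (- K1)
    + 2 * l * K2 * exp K1 < 0 ->
  exists c0, 0 < c0 /\ forall g1 g2 H1 H2,
    solves_cell G V g1 H1 -> solves_cell G V g2 H2 -> f = g1 \/ f = g2 ->
    0 < RInt g2 0 1 - RInt g1 0 1 < c0 ->
    (forall x, 0 <= x <= 1 -> Pmin <= g1 x <= Pmax) ->
    (forall x, 0 <= x <= 1 -> Pmin <= g2 x <= Pmax) ->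
    RInt (fun x => Derive G (g2 x)) 0 1 < RInt (fun x => Derive G (g1 x)) 0 1.
Proof.
  intros HP Hneg.
  set (dd := Derive (Derive G)) in *.
  assert (HS : (L - l) * dd p1 + (1 - L - l) * dd p2 <= 0) by nra.
  assert (HX : 0 <= 2 * l * K2)
    by (pose proof (HK2 (f 0) (Hf_range 0)); pose proof (Rabs_pos (dd (f 0))); nra).
  destruct (perturbed_exp_negativity _ _ K1 HS HX Hneg) as [tau [Htau Hpert]].
  pose proof (C1_Derive_continuity_pt (Derive G) (is_C2_Derive_C1 G HG)) as cdd.
  destruct (continuity_ab_maj (fun p => Rabs (dd p)) Pmin Pmax HP) as [pK [HKpp _]].
  { intros p _. apply (continuity_pt_comp dd Rabs); [apply cdd | apply Rcontinuity_abs]. }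
  pose proof (Rabs_pos (dd pK)) as HKpp0. set (Kpp := Rabs (dd pK)) in *.
  destruct (Heine_cor2 (f := dd) (a := Pmin) (b := Pmax) (fun p _ => cdd p) (mkposreal tau Htau))
    as [delta Hdelta].
  pose proof (cond_pos delta). pose proof (exp_pos (2 * K1 + 2 * tau)).
  exists (Rmin (tau / (2 * Kpp + 1)) (delta / exp (2 * K1 + 2 * tau))).
  split; [apply Rmin_pos; apply Rdiv_lt_0_compat; lra |].
  intros g1 g2 H1 H2 S1 S2 Hf [Hc0 Hc] R1 R2.
  set (c := RInt g2 0 1 - RInt g1 0 1) in *.
  assert (Ht : 2 * Kpp * c <= tau).
  { pose proof (Rlt_le_trans _ _ _ Hc (Rmin_l _ _)) as Hc1.
    apply (Rmult_lt_compat_r (2 * Kpp + 1)) in Hc1; [| lra].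
    unfold Rdiv in Hc1. rewrite Rmult_assoc, Rinv_l, Rmult_1_r in Hc1 by lra. nra. }
  assert (Hd : c * exp (2 * K1 + 4 * Kpp * c) < delta).
  { pose proof (Rlt_le_trans _ _ _ Hc (Rmin_r _ _)) as Hc2.
    apply (Rmult_lt_compat_r (exp (2 * K1 + 2 * tau))) in Hc2; [| lra].
    unfold Rdiv in Hc2. rewrite Rmult_assoc, Rinv_l, Rmult_1_r in Hc2 by lra.
    eapply Rle_lt_trans; [| exact Hc2].
    apply Rmult_le_compat_l; [lra | apply exp_le_compat; lra]. }
  pose proof (cell_gap_estimate Pmin Pmax Kpp tau delta c g1 g2 H1 H2 S1 S2 Hf eq_refl Hc0
                R1 R2 HKpp Hdelta ltac:(lra) Hd) as Hest.
  fold dd in Hest.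
  pose proof (Hpert (2 * Kpp * c) tau ltac:(nra) ltac:(lra)) as Hbracket.
  pose proof (cell_solutions_ordered G V (is_C2_C1 G HG) _ _ _ _ S1 S2
                ltac:(unfold c in Hc0; lra) 0 ltac:(lra)).
  rewrite (RInt_minus (V := R_CompleteNormedModule) (fun x => Derive G (g2 x))
             (fun x => Derive G (g1 x))) in Hest
    by (apply ex_RInt_of_continuity; intro;
        eauto using continuity_pt_Derive_comp, solves_cell_continuity, is_C2_C1).
  unfold minus, plus, opp in Hest; simpl in Hest. nra.
Qed.

End Small_gap.

Theorem lemma5p3
  (G : R -> R) (p1 p2 K1 K2 ell : R) (f : R -> R)
  (fth : R -> R -> R) (Hbar : R -> R) :
  is_C2 G -> coercive G ->
  p1 < p2 -> Derive G p1 < 0 -> 0 < Derive G p2 ->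
  is_max_on (fun p => Rabs (Derive G p)) p1 p2 K1 ->
  is_max_on (fun p => Rabs (Derive (Derive G) p)) p1 p2 K2 ->
  (* the function f *)
  one_periodic f -> is_C1 f -> lipschitz (Derive f) ->
  (forall x, p1 <= f x <= p2) ->
  (forall x, 0 <= x <= Lval G p1 p2 - ell -> f x = p1) ->
  (forall x, Lval G p1 p2 <= x <= 1 - ell -> f x = p2) ->
  RInt (fun x => Derive G (f x)) 0 1 = 0 ->
  (* f_theta: the 1-periodic C^1 function with mean theta solving
     f_theta' + G(f_theta) + V = Hbar(theta) *)
  (forall th, one_periodic (fth th) /\ is_C1 (fth th) /\
              RInt (fth th) 0 1 = th /\
              forall x, Derive (fth th) x + G (fth th x) + Vpot G f x = Hbar th) ->
  (* hypotheses of the lemma *)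
  Derive (Derive G) p1 < 0 -> Derive (Derive G) p2 < 0 ->
  0 < ell < Rmin (Lval G p1 p2) (1 - Lval G p1 p2) ->
  ((Lval G p1 p2 - ell) * Derive (Derive G) p1
     + (1 - Lval G p1 p2 - ell) * Derive (Derive G) p2) * exp (- K1)
    + 2 * ell * K2 * exp K1 < 0 ->
  exists c0 : R, 0 < c0 /\
    forall c : R, 0 < c < c0 ->
      I1 G (fth (RInt f 0 1 + c)) < 0 /\ 0 < I1 G (fth (RInt f 0 1 - c)).
Proof.
  intros HG _ _ _ _ [HK1 _] [HK2 _] Hper Hf1 _ Hf_range Hf_p1 Hf_p2 Hf_mean Hfth
    Hdd1 Hdd2 [Hl0 Hl] Hneg.
  apply Rmin_Rgt in Hl as [HlL HlL'].
  set (th0 := RInt f 0 1).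
  assert (Sth : forall th, solves_cell G (Vpot G f) (fth th) (Hbar th) /\ RInt (fth th) 0 1 = th).
  { intro th. destruct (Hfth th) as (Hp & Hc & Hm & He).
    repeat split; auto using one_periodic_1_0. intro x. apply Hc. }
  assert (Sf : solves_cell G (Vpot G f) f 0).
  { repeat split; auto using one_periodic_1_0. intro x. apply Hf1. intro x. unfold Vpot. ring. }
  destruct (cell_solutions_bounded G (Vpot G f) (is_C2_C1 G HG) _ _ _ _
              (proj1 (Sth (th0 - 1))) (proj1 (Sth (th0 + 1)))) as (Pmin & Pmax & HP).
  rewrite !(proj2 (Sth _)) in HP.
  assert (Hrange : forall th x, th0 - 1 < th < th0 + 1 -> 0 <= x <= 1 -> Pmin <= fth th x <= Pmax)
    by (intros th x Hth; apply (HP _ _ (proj1 (Sth th))); rewrite (proj2 (Sth th)); lra).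
  assert (Hfrange : forall x, 0 <= x <= 1 -> Pmin <= f x <= Pmax)
    by (apply (HP f 0 Sf); unfold th0; lra).
  destruct (small_gap_decreases_integral G (Vpot G f) f p1 p2 K1 K2 (Lval G p1 p2) ell HG
              Hf_range Hf_p1 Hf_p2 Hf_mean HK1 HK2 ltac:(lra) HlL' ltac:(lra) ltac:(lra)
              Pmin Pmax ltac:(pose proof (Hfrange 0); lra) Hneg) as (c0 & Hc0 & Hgap).
  exists (Rmin 1 c0). split; [apply Rmin_pos; lra |].
  intros c [Hc Hcc]. pose proof (Rlt_le_trans _ _ _ Hcc (Rmin_l 1 c0)).
  pose proof (Rlt_le_trans _ _ _ Hcc (Rmin_r 1 c0)).
  unfold I1. split.
  - apply Rlt_le_trans with (RInt (fun x => Derive G (f x)) 0 1); [| right; exact Hf_mean].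
    apply (Hgap f (fth (th0 + c)) 0 (Hbar (th0 + c))); auto; try apply Sth;
      [rewrite (proj2 (Sth _)); unfold th0; lra | intros; apply Hrange; lra].
  - apply Rle_lt_trans with (RInt (fun x => Derive G (f x)) 0 1);
      [right; symmetry; exact Hf_mean |].
    apply (Hgap (fth (th0 - c)) f (Hbar (th0 - c)) 0); auto; try apply Sth;
      [rewrite (proj2 (Sth _)); unfold th0; lra | intros; apply Hrange; lra].
Qed.
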